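(* Let $(X,d)$, $\mathcal{R}$, $p$, $T$, $Y$ and $\lambda$ satisfy all hypotheses (1)–(4) of the following fixed point theorem: $(X,d)$ is a metric space, $\mathcal{R}$ a binary relation on $X$, $p$ a $w$-distance with respect to $\mathcal{R}$, $T:X\to X$, and (1) there is $Y\subseteq X$ with $T(X)\subseteq Y$ and $(Y,d)$ $\mathcal{R}$-complete; (2) $X(T,\mathcal{R})\ne\emptyset$ and $\mathcal{R}$ is $T$-closed; (3) $T$ is $\mathcal{R}$-continuous or $\mathcal{R}|_Y$ is $d$-self-closed; (4) there is $\lambda\in[0,1)$ with $p(Tx,Ty)\le\lambda p(x,y)$ whenever $(x,y)\in\mathcal{R}$. Suppose in addition that at least one of the following holds: (a) for every $x,y\in T(X)$ there exists $z\in T(X)$ such that $(z,x)\in\mathcal{R}$ and $(z,y)\in\mathcal{R}$; (b) $\mathcal{R}|_{T(X)}$ is complete, i.e. for all $x,y\in T(X)$, $(x,y)\in\mathcal{R}$ or $(y,x)\in\mathcal{R}$. Then $T$ has a unique fixed point.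
   Context: A sequence $(x_n)$ is $\mathcal{R}$-preserving if $(x_n,x_{n+1})\in\mathcal{R}$ for all $n\ge0$. $(Y,d)$ is $\mathcal{R}$-complete if every $\mathcal{R}$-preserving Cauchy sequence in $Y$ converges in $Y$. $X(T,\mathcal{R})=\{x\in X:(x,Tx)\in\mathcal{R}\}$. $\mathcal{R}$ is $T$-closed if $(x,y)\in\mathcal{R}\Rightarrow(Tx,Ty)\in\mathcal{R}$. $T$ is $\mathcal{R}$-continuous if $Tx_n\to Tx$ for every $\mathcal{R}$-preserving sequence $x_n\to x$. $\mathcal{R}|_Y=\mathcal{R}\cap(Y\times Y)$ is $d$-self-closed if every $\mathcal{R}|_Y$-preserving sequence $x_n\to x$ has a subsequence with $(x_{n_k},x)\in\mathcal{R}|_Y$ for all $k$. A function $g$ is $\mathcal{R}$-lower semi-continuous at $x$ if $\liminf_n g(x_n)\ge g(x)$ for every $\mathcal{R}$-preserving sequence $x_n\to x$. A $w$-distance with respect to $\mathcal{R}$ is $p:X\times X\to[0,\infty)$ with: (w1') $p(x,z)\le p(x,y)+p(y,z)$; (w2') each $p(x,\cdot)$ is $\mathcal{R}$-lower semi-continuous; (w3') for every $\epsilon>0$ there is $\delta>0$ such that $p(z,x)\le\delta$ and $p(z,y)\le\delta$ imply $d(x,y)\le\epsilon$. *)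

From Stdlib Require Import Reals.
Open Scope R_scope.

Definition is_metric {X : Type} (d : X -> X -> R) : Prop :=
  (forall x y, 0 <= d x y) /\
  (forall x y, d x y = 0 <-> x = y) /\
  (forall x y, d x y = d y x) /\
  (forall x y z, d x z <= d x y + d y z).

Definition converges {X : Type} (d : X -> X -> R) (u : nat -> X) (x : X) : Prop :=
  forall eps, 0 < eps -> exists N, forall n, (N <= n)%nat -> d (u n) x < eps.

Definition cauchy {X : Type} (d : X -> X -> R) (u : nat -> X) : Prop :=
  forall eps, 0 < eps -> exists N, forall m n, (N <= m)%nat -> (N <= n)%nat ->
    d (u m) (u n) < eps.

Definition R_preserving {X : Type} (Rel : X -> X -> Prop) (u : nat -> X) : Prop :=
  forall n, Rel (u n) (u (S n)).

Definition rel_complete {X : Type} (d : X -> X -> R) (Rel : X -> X -> Prop)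
  (Y : X -> Prop) : Prop :=
  forall u : nat -> X, (forall n, Y (u n)) -> R_preserving Rel u -> cauchy d u ->
    exists x, Y x /\ converges d u x.

Definition T_closed {X : Type} (Rel : X -> X -> Prop) (T : X -> X) : Prop :=
  forall x y, Rel x y -> Rel (T x) (T y).

Definition R_continuous {X : Type} (d : X -> X -> R) (Rel : X -> X -> Prop)
  (T : X -> X) : Prop :=
  forall (u : nat -> X) (x : X), R_preserving Rel u -> converges d u x ->
    converges d (fun n => T (u n)) (T x).

Definition restr {X : Type} (Rel : X -> X -> Prop) (Y : X -> Prop) : X -> X -> Prop :=
  fun x y => Rel x y /\ Y x /\ Y y.

Definition d_self_closed {X : Type} (d : X -> X -> R) (Rel : X -> X -> Prop)
  (Y : X -> Prop) : Prop :=
  forall (u : nat -> X) (x : X), (forall n, Y (u n)) -> Y x ->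
    R_preserving (restr Rel Y) u -> converges d u x ->
    exists phi : nat -> nat, (forall k, (phi k < phi (S k))%nat) /\
      forall k, restr Rel Y (u (phi k)) x.

(* g is R-lower semicontinuous at x: liminf g(x_n) >= g(x), written out with eps *)
Definition R_lsc_at {X : Type} (d : X -> X -> R) (Rel : X -> X -> Prop)
  (g : X -> R) (x : X) : Prop :=
  forall u : nat -> X, R_preserving Rel u -> converges d u x ->
    forall eps, 0 < eps -> exists N, forall n, (N <= n)%nat -> g x - eps < g (u n).

Definition w_distance {X : Type} (d : X -> X -> R) (Rel : X -> X -> Prop)
  (p : X -> X -> R) : Prop :=
  (forall x y, 0 <= p x y) /\
  (forall x y z, p x z <= p x y + p y z) /\
  (forall x y, R_lsc_at d Rel (p x) y) /\
  (forall eps, 0 < eps -> exists delta, 0 < delta /\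
     forall x y z, p z x <= delta -> p z y <= delta -> d x y <= eps).

(* The Picard iterates x_n = T^n x0 of a point with (x0, T x0) in R form an
   R-preserving sequence with p(x_n, x_{n+1}) <= lambda^n p(x0, T x0), so
   p(x_n, x_m) <= lambda^n p(x0, T x0) / (1 - lambda) for n < m; property (w3')
   turns this into a d-Cauchy sequence, which converges to some z by
   R-completeness of Y, and lower semicontinuity of p(x_n, .) gives the same
   bound for p(x_n, z). Either R-continuity of T or self-closedness of R|_Y then
   forces T z = z. For uniqueness, two fixed points a and b are shown to be
   p-close to common points, which by (w3') means d(a, b) = 0. *)
From Stdlib Require Import Reals Lra Lia.
Open Scope R_scope.

Lemma pow_scaled_eventually_le (lambda M delta : R) :
  0 <= lambda < 1 -> 0 < delta ->
  exists N, forall n, (N <= n)%nat -> M * lambda ^ n <= delta.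
Proof.
  intros [Hl0 Hl1] Hdelta.
  assert (HM : 0 < Rabs M + 1) by (pose proof (Rabs_pos M); lra).
  destruct (pow_lt_1_zero lambda) with (y := delta / (Rabs M + 1)) as [N HN].
  - rewrite Rabs_right; lra.
  - apply Rdiv_lt_0_compat; lra.
  - exists N; intros n Hn.
    specialize (HN n Hn).
    rewrite Rabs_right in HN by (apply Rle_ge, pow_le; lra).
    assert (Hpow : 0 <= lambda ^ n) by (apply pow_le; lra).
    assert (HMabs : M <= Rabs M) by apply RRle_abs.
    apply Rmult_lt_compat_l with (r := Rabs M + 1) in HN; [|lra].
    replace ((Rabs M + 1) * (delta / (Rabs M + 1))) with delta in HN by (field; lra).
    nra.
Qed.

Section WDistance.

Variables (X : Type) (d : X -> X -> R) (Rel : X -> X -> Prop) (p : X -> X -> R).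
Hypothesis Hd : is_metric d.
Hypothesis Hp : w_distance d Rel p.

Lemma w_nonneg x y : 0 <= p x y.
Proof. destruct Hp as [H _]; apply H. Qed.

Lemma w_triangle x y z : p x z <= p x y + p y z.
Proof. destruct Hp as [_ [H _]]; apply H. Qed.

Lemma w_close_d_close (eps : R) : 0 < eps ->
  exists delta, 0 < delta /\
    forall x y z, p z x <= delta -> p z y <= delta -> d x y <= eps.
Proof. destruct Hp as [_ [_ [_ H]]]; apply H. Qed.

Lemma converges_unique u a b : converges d u a -> converges d u b -> a = b.
Proof.
  destruct Hd as [dpos [deq [dsym dtri]]].
  intros Ha Hb; apply deq.
  destruct (Rle_lt_or_eq_dec 0 (d a b) (dpos a b)) as [Hab|Hab]; [exfalso | auto].
  destruct (Ha (d a b / 2)) as [N1 HN1]; [lra|].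
  destruct (Hb (d a b / 2)) as [N2 HN2]; [lra|].
  specialize (HN1 (Nat.max N1 N2) (Nat.le_max_l _ _)).
  specialize (HN2 (Nat.max N1 N2) (Nat.le_max_r _ _)).
  pose proof (dtri a (u (Nat.max N1 N2)) b) as Htri.
  rewrite (dsym a (u _)) in Htri; lra.
Qed.

Lemma w_distance_eq a b :
  (forall delta, 0 < delta -> exists z, p z a <= delta /\ p z b <= delta) -> a = b.
Proof.
  destruct Hd as [dpos [deq _]].
  intros Hclose; apply deq.
  destruct (Rle_lt_or_eq_dec 0 (d a b) (dpos a b)) as [Hab|Hab]; [exfalso | auto].
  destruct (w_close_d_close (d a b / 2)) as [delta [Hdelta Hw]]; [lra|].
  destruct (Hclose delta Hdelta) as [z [Hza Hzb]].
  specialize (Hw a b z Hza Hzb); lra.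
Qed.

Lemma w_distance_cauchy u :
  (forall delta, 0 < delta ->
     exists a N, forall n, (N <= n)%nat -> p a (u n) <= delta) ->
  cauchy d u.
Proof.
  intros Hanchor eps Heps.
  destruct (w_close_d_close (eps / 2)) as [delta [Hdelta Hw]]; [lra|].
  destruct (Hanchor delta Hdelta) as [a [N HN]].
  exists N; intros m n Hm Hn.
  specialize (Hw _ _ _ (HN m Hm) (HN n Hn)); lra.
Qed.

Lemma w_le_of_limit a z u B :
  R_preserving Rel u -> converges d u z ->
  (exists N, forall n, (N <= n)%nat -> p a (u n) <= B) -> p a z <= B.
Proof.
  destruct Hp as [_ [_ [plsc _]]].
  intros Hu Hz [N HN].
  apply Rnot_lt_le; intro Hlt.
  destruct (plsc a z u Hu Hz (p a z - B)) as [N' HN']; [lra|].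
  specialize (HN' (Nat.max N N') (Nat.le_max_r _ _)).
  specialize (HN (Nat.max N N') (Nat.le_max_l _ _)).
  lra.
Qed.

Section Contraction.

Variables (T : X -> X) (lambda : R).
Hypothesis HT : T_closed Rel T.
Hypothesis Hlam0 : 0 <= lambda.
Hypothesis Hlam1 : lambda < 1.
Hypothesis Hcontr : forall x y, Rel x y -> p (T x) (T y) <= lambda * p x y.

Lemma iter_rel_fixed_point w c n : T c = c -> Rel w c ->
  Rel (Nat.iter n T w) c /\ p (Nat.iter n T w) c <= lambda ^ n * p w c.
Proof.
  intros Hc Hwc; induction n as [|n [IHrel IHp]]; simpl.
  - split; [exact Hwc | lra].
  - pose proof (Hcontr _ _ IHrel) as Hstep.
    rewrite Hc in Hstep.
    pose proof (w_nonneg (Nat.iter n T w) c).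
    split; [rewrite <- Hc; apply HT; exact IHrel | nra].
Qed.

Lemma fixed_point_unique_of_lower_bounds a b :
  T a = a -> T b = b ->
  (forall x y, (exists u, x = T u) -> (exists v, y = T v) ->
     exists z, (exists w, z = T w) /\ Rel z x /\ Rel z y) ->
  a = b.
Proof.
  intros Ha Hb Hlow.
  destruct (Hlow a b (ex_intro _ a (eq_sym Ha)) (ex_intro _ b (eq_sym Hb)))
    as [z [_ [Hza Hzb]]].
  apply w_distance_eq; intros delta Hdelta.
  destruct (pow_scaled_eventually_le lambda (p z a + p z b) delta)
    as [N HN]; [lra | exact Hdelta |].
  specialize (HN N (le_n N)).
  destruct (iter_rel_fixed_point z a N Ha Hza) as [_ HNa].
  destruct (iter_rel_fixed_point z b N Hb Hzb) as [_ HNb].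
  pose proof (pow_le lambda N Hlam0).
  pose proof (w_nonneg z a); pose proof (w_nonneg z b).
  exists (Nat.iter N T z); split; nra.
Qed.

(* Totality applied to a fixed point c with itself gives (c, c) in R, so
   contractivity forces p c c = 0. *)
Lemma fixed_point_unique_of_total a b :
  T a = a -> T b = b ->
  (forall x y, (exists u, x = T u) -> (exists v, y = T v) -> Rel x y \/ Rel y x) ->
  a = b.
Proof.
  intros Ha Hb Htot.
  assert (Hself : forall c, T c = c -> p c c = 0).
  { intros c Hc.
    pose proof (w_nonneg c c).
    destruct (Htot c c (ex_intro _ c (eq_sym Hc)) (ex_intro _ c (eq_sym Hc)))
      as [Hcc|Hcc]; pose proof (Hcontr _ _ Hcc) as Hle; rewrite Hc in Hle; nra. }
  pose proof (Hself a Ha); pose proof (Hself b Hb).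
  pose proof (w_nonneg a b); pose proof (w_nonneg b a).
  destruct (Htot a b (ex_intro _ a (eq_sym Ha)) (ex_intro _ b (eq_sym Hb)))
    as [Hab|Hab]; pose proof (Hcontr _ _ Hab) as Hle; rewrite Ha, Hb in Hle;
    apply w_distance_eq; intros delta Hdelta.
  - exists a; split; nra.
  - exists b; split; nra.
Qed.

Section Picard.

Variable x0 : X.
Hypothesis Hx0 : Rel x0 (T x0).

Definition picard (n : nat) : X := Nat.iter n T x0.

Lemma picard_bound_nonneg : 0 <= p x0 (T x0) / (1 - lambda).
Proof.
  apply Rmult_le_pos; [apply w_nonneg | apply Rlt_le, Rinv_0_lt_compat; lra].
Qed.

Lemma picard_rel n : Rel (picard n) (picard (S n)).
Proof.
  induction n as [|n IH]; [exact Hx0 | apply HT; exact IH].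
Qed.

Lemma picard_step n : p (picard n) (picard (S n)) <= lambda ^ n * p x0 (T x0).
Proof.
  induction n as [|n IH]; [simpl; lra|].
  pose proof (Hcontr _ _ (picard_rel n)) as Hle.
  pose proof (w_nonneg (picard n) (picard (S n))).
  change (p (T (picard n)) (T (picard (S n))) <= lambda * lambda ^ n * p x0 (T x0)).
  nra.
Qed.

Lemma picard_segment n k :
  p (picard n) (picard (n + S k)) <=
  p x0 (T x0) / (1 - lambda) * (lambda ^ n - lambda ^ (n + S k)).
Proof.
  assert (Hgeom : forall q, q * p x0 (T x0) =
            p x0 (T x0) / (1 - lambda) * (q - lambda * q)) by (intro; field; lra).
  induction k as [|k IH].
  - rewrite Nat.add_1_r, <- tech_pow_Rmult, <- Hgeom.
    apply picard_step.
  - rewrite Nat.add_succ_r.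
    pose proof (w_triangle (picard n) (picard (n + S k)) (picard (S (n + S k)))).
    pose proof (picard_step (n + S k)) as Hstep.
    rewrite Hgeom in Hstep; rewrite <- (tech_pow_Rmult _ (n + S k)); lra.
Qed.

Lemma picard_tail n m : (n < m)%nat ->
  p (picard n) (picard m) <= p x0 (T x0) / (1 - lambda) * lambda ^ n.
Proof.
  intros Hnm.
  replace m with (n + S (m - n - 1))%nat by lia.
  pose proof (picard_segment n (m - n - 1)).
  pose proof (pow_le lambda (n + S (m - n - 1)) Hlam0).
  pose proof picard_bound_nonneg.
  nra.
Qed.

Lemma picard_tail_eventually_le delta : 0 < delta ->
  exists N, forall n m, (N <= n)%nat -> (n < m)%nat -> p (picard n) (picard m) <= delta.
Proof.
  intros Hdelta.
  destruct (pow_scaled_eventually_le lambda (p x0 (T x0) / (1 - lambda)) delta)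
    as [N HN]; [lra | exact Hdelta |].
  exists N; intros n m Hn Hnm.
  eapply Rle_trans; [apply picard_tail, Hnm | apply HN, Hn].
Qed.

Lemma picard_cauchy : cauchy d (fun n => picard (S n)).
Proof.
  apply w_distance_cauchy; intros delta Hdelta.
  destruct (picard_tail_eventually_le delta Hdelta) as [N HN].
  exists (picard N), N; intros n Hn; apply HN; lia.
Qed.

Section Limit.

Variable z : X.
Hypothesis Hz : converges d (fun n => picard (S n)) z.

Lemma picard_limit_bound n : p (picard n) z <= p x0 (T x0) / (1 - lambda) * lambda ^ n.
Proof.
  apply (w_le_of_limit _ _ (fun k => picard (S k))); [|exact Hz|].
  - intro k; apply picard_rel.
  - exists n; intros k Hk; apply picard_tail; lia.
Qed.

Lemma picard_limit_fixed_of_continuous : R_continuous d Rel T -> T z = z.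
Proof.
  intros Hcont.
  apply (converges_unique (fun n => picard (S (S n)))).
  - apply (Hcont (fun n => picard (S n))); [intro; apply picard_rel | exact Hz].
  - intros eps Heps; destruct (Hz eps Heps) as [N HN].
    exists N; intros n Hn; apply HN; lia.
Qed.

(* Along the subsequence related to z, contractivity makes T z p-close to the
   same Picard iterates as z. *)
Lemma picard_limit_fixed_of_self_closed (Y : X -> Prop) :
  (forall x, Y (T x)) -> Y z -> d_self_closed d Rel Y -> T z = z.
Proof.
  intros HY Yz Hsc.
  destruct (Hsc (fun n => picard (S n)) z (fun n => HY _) Yz) as [phi [Hphi Hrel]];
    [intro n; split; [apply picard_rel | split; apply HY] | exact Hz |].
  assert (Hphi_ge : forall k, (k <= phi k)%nat)
    by (induction k as [|k IH]; [lia | pose proof (Hphi k); lia]).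
  apply w_distance_eq; intros delta Hdelta.
  destruct (pow_scaled_eventually_le lambda (p x0 (T x0) / (1 - lambda)) delta)
    as [N HN]; [lra | exact Hdelta |].
  destruct (Hrel N) as [Hkz _]; cbv beta in Hkz.
  set (k := S (phi N)) in Hkz.
  assert (Hk : (N <= k)%nat) by (pose proof (Hphi_ge N); unfold k; lia).
  pose proof (Hcontr _ _ Hkz) as HTz.
  pose proof (picard_limit_bound k); pose proof (picard_limit_bound (S k)).
  pose proof (HN k Hk); pose proof (HN (S k) ltac:(lia)).
  pose proof (w_nonneg (picard k) z).
  pose proof (pow_le lambda k Hlam0).
  pose proof picard_bound_nonneg.
  exists (picard (S k)); split; [change (picard (S k)) with (T (picard k)) |]; nra.
Qed.

End Limit.

End Picard.

End Contraction.

End WDistance.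

Theorem theorem2p2 (X : Type) (d : X -> X -> R) (Rel : X -> X -> Prop)
  (p : X -> X -> R) (T : X -> X) (Y : X -> Prop) (lambda : R)
  (Hd : is_metric d) (Hp : w_distance d Rel p)
  (H1a : forall x, Y (T x)) (H1b : rel_complete d Rel Y)
  (H2a : exists x, Rel x (T x)) (H2b : T_closed Rel T)
  (H3 : R_continuous d Rel T \/ d_self_closed d Rel Y)
  (H4a : 0 <= lambda) (H4b : lambda < 1)
  (H4c : forall x y, Rel x y -> p (T x) (T y) <= lambda * p x y)
  (Hab : (forall x y, (exists a, x = T a) -> (exists b, y = T b) ->
            exists z, (exists c, z = T c) /\ Rel z x /\ Rel z y)
         \/
         (forall x y, (exists a, x = T a) -> (exists b, y = T b) ->
            Rel x y \/ Rel y x)) :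
  exists! x, T x = x.
Proof.
  destruct H2a as [x0 Hx0].
  destruct (H1b (fun n => picard X T x0 (S n))) as [z [Yz Hz]].
  - intro n; apply H1a.
  - intro n; exact (picard_rel X Rel T H2b x0 Hx0 (S n)).
  - eapply picard_cauchy; eassumption.
  - assert (Hfix : T z = z).
    { destruct H3 as [Hcont | Hsc].
      - eapply picard_limit_fixed_of_continuous; eassumption.
      - eapply picard_limit_fixed_of_self_closed; eassumption. }
    exists z; split; [exact Hfix |].
    intros y Hy; destruct Hab as [Hlow | Htot].
    + eapply fixed_point_unique_of_lower_bounds; eassumption.
    + eapply fixed_point_unique_of_total; eassumption.
Qed.
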